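(* Let $m,n,T$ be positive integers with $T\ge 2$, let $\mathbf{G}\in\mathbb{F}_2^{n\times m}$ have $n$ distinct nonzero rows $\mathbf{g}_1,\dots,\mathbf{g}_n$ spanning a subspace of dimension $T$, and let $\mathbf{A}\in\mathbb{F}_2^{T\times m}$ be a matrix whose rows form a basis of the row space of $\mathbf{G}$. If $\lceil T/2\rceil\le k<T$, then there exists a matrix $\mathbf{P}\in\mathbb{F}_2^{T_k\times T}$ with $T_k\le\min\{n,\,T+1\}$ such that every $\mathbf{g}_i$ is the sum over $\mathbb{F}_2$ of at most $k$ rows of $\mathbf{P}\mathbf{A}$.
   Context: Such a $\mathbf{P}$ is called a $k$-limited-access scheme with $T_k$ transmissions for the coding matrix $\mathbf{A}$. *)

From HB Require Import structures.
From mathcomp Require Import all_boot all_order all_algebra.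
Set Implicit Arguments. Unset Strict Implicit. Unset Printing Implicit Defensive.
Import GRing.Theory.
Local Open Scope ring_scope.

Definition limited_access_scheme (n m T Tk k : nat)
  (G : 'M['F_2]_(n, m)) (A : 'M['F_2]_(T, m)) (P : 'M['F_2]_(Tk, T)) : Prop :=
  forall i : 'I_n, exists S : {set 'I_Tk},
    (#|S| <= k)%N /\ row i G = \sum_(j in S) row j (P *m A).

(* A request g_i = x A, with x in F_2^T, is the sum of the rows of the
   identity indexed by the support of x, or of the all-ones row together with
   the rows indexed by the complement of that support; one of the two uses at
   most (T+1)/2 <= k rows.  This gives T+1 transmissions; when n <= T+1,
   transmitting every request separately is already good enough. *)

From HB Require Import structures.
From mathcomp Require Import all_boot all_order all_algebra.
From mathcomp Require Import zify.
Set Implicit Arguments.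
Unset Strict Implicit.
Unset Printing Implicit Defensive.
Import GRing.Theory.
Local Open Scope ring_scope.

Lemma F2_cases (a : 'F_2) : a = 0 \/ a = 1.
Proof. by case: a => [[|[|n]]] //= ?; [left | right]; apply/val_inj. Qed.

Lemma addmx_self_F2 (p q : nat) (M : 'M['F_2]_(p, q)) : M + M = 0.
Proof. by apply/matrixP => i j; rewrite !mxE addrr_pchar2 // pchar_Fp. Qed.

Definition row_support (T : nat) (x : 'rV['F_2]_T) : {set 'I_T} :=
  [set j | x 0 j != 0].

Lemma row_sum_support (T : nat) (x : 'rV['F_2]_T) :
  x = \sum_(j in row_support x) 'e_j.
Proof.
rewrite [LHS]row_sum_delta [RHS]big_mkcond /=; apply: eq_bigr => j _.
by rewrite inE; case: (F2_cases (x 0 j)) => ->; rewrite ?scale0r ?scale1r.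
Qed.

Lemma row_support_addones (T : nat) (x : 'rV['F_2]_T) :
  row_support (x + const_mx 1) = ~: row_support x.
Proof.
apply/setP => j; rewrite !inE !mxE.
by case: (F2_cases (x 0 j)) => ->.
Qed.

Lemma row_sum_cosupport (T : nat) (x : 'rV['F_2]_T) :
  x = const_mx 1 + \sum_(j in ~: row_support x) 'e_j.
Proof.
by rewrite -row_support_addones -row_sum_support addrCA addmx_self_F2 addr0.
Qed.

(* The all-ones row sits at index [lshift T 0]; the unit row e_j at [rshift 1 j]. *)
Definition ones_identity_mx (T : nat) : 'M['F_2]_(1 + T, T) :=
  col_mx (const_mx 1) 1%:M.

Lemma sum_ones_identity_rows (T : nat) (S : {set 'I_T}) :
  \sum_(j in @rshift 1 T @: S) row j (ones_identity_mx T) = \sum_(j in S) 'e_j.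
Proof.
rewrite big_imset /=; last by move=> a b _ _; apply: rshift_inj.
by apply: eq_bigr => j _; rewrite rowKd row1.
Qed.

Lemma ones_identity_mx_few_rows (T : nat) (x : 'rV['F_2]_T) :
  exists S : {set 'I_(1 + T)},
    (2 * #|S| <= T.+1)%N /\ x = \sum_(j in S) row j (ones_identity_mx T).
Proof.
have card_shift (S : {set 'I_T}) : #|@rshift 1 T @: S| = #|S|.
  by apply: card_imset; apply: rshift_inj.
have := cardsC (row_support x); rewrite card_ord.
case: (leqP (2 * #|row_support x|) T.+1) => Hsupp Hcard.
  exists (@rshift 1 T @: row_support x); rewrite card_shift; split => //.
  by rewrite sum_ones_identity_rows -row_sum_support.
have ones_new : lshift T 0 \notin @rshift 1 T @: ~: row_support x.
  by apply/imsetP => -[j _ /(congr1 val)] /=.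
exists (lshift T 0 |: @rshift 1 T @: ~: row_support x); split.
  rewrite cardsU1 ones_new card_shift.
  move: Hcard Hsupp; clear ones_new; set s := #|row_support x|; set c := #|~: _|; lia.
rewrite (big_setU1 _ ones_new) /=.
by rewrite rowKu row_const sum_ones_identity_rows -row_sum_cosupport.
Qed.

Lemma limited_access_scheme_coords (n m T Tk k : nat)
    (G : 'M['F_2]_(n, m)) (A : 'M['F_2]_(T, m)) (X : 'M['F_2]_(n, T))
    (P : 'M['F_2]_(Tk, T)) :
  G = X *m A ->
  (forall i : 'I_n, exists S : {set 'I_Tk},
     (#|S| <= k)%N /\ row i X = \sum_(j in S) row j P) ->
  limited_access_scheme k G A P.
Proof.
move=> -> coords i; have [S [cardS rowX]] := coords i.
exists S; split => //.
by rewrite row_mul rowX mulmx_suml; apply: eq_bigr => j _; rewrite row_mul.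
Qed.

Theorem theorem1 (m n T k : nat) (G : 'M['F_2]_(n, m)) (A : 'M['F_2]_(T, m)) :
  (0 < m)%N -> (0 < n)%N -> (2 <= T)%N ->
  injective (fun i : 'I_n => row i G) ->
  (forall i : 'I_n, row i G != 0) ->
  \rank G = T ->
  row_free A -> (A == G)%MS ->
  ((T + 1) %/ 2 <= k)%N -> (k < T)%N ->
  exists (Tk : nat) (P : 'M['F_2]_(Tk, T)),
    (Tk <= minn n T.+1)%N /\ limited_access_scheme k G A P.
Proof.
move=> _ _ HT _ _ _ _ /andP[_ sGA] Hk _.
set X := G *m pinvmx A.
have GX : G = X *m A by rewrite mulmxKpV.
have [HnT | HTn] := leqP n T.+1.
  exists n, X; split; first by lia.
  apply: limited_access_scheme_coords GX _ => i.
  by exists [set i]; rewrite cards1 big_set1; split => //; lia.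
exists (1 + T)%N, (ones_identity_mx T); split; first by lia.
apply: limited_access_scheme_coords GX _ => i.
have [S [cardS rowX]] := ones_identity_mx_few_rows (row i X).
by exists S; split => //; lia.
Qed.
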